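(* Let $G$ be an $r$-graph that maximises the Lagrangian among $r$-graphs with the same number of edges, and suppose that $w$ is a maximal weighting of $G$ which is decreasing and which satisfies $w(x) > 0$ for every $x \in V(G)$. Then $G$ is left-compressed.
   Context: An $r$-graph is a finite family $G$ of $r$-element subsets of $\mathbb{N}$; $V(G)$ is the set of elements lying in some edge. A weighting of $\mathbb{N}$ is $w:\mathbb{N}\to[0,\infty)$ with $\sum_x w(x)=1$; $w(G)=\sum_{e\in G}\prod_{x\in e}w(x)$; the Lagrangian is $\lambda(G)=\max_w w(G)$, and $w$ is maximal for $G$ if $w(G)=\lambda(G)$. A weighting is decreasing if $w(i)\ge w(j)$ whenever $i<j$. For $x<y$ and an $r$-set $F$, the $xy$-compression is $C_{xy}(F)=(F\setminus\{y\})\cup\{x\}$ if $x\notin F$, $y\in F$, and $C_{xy}(F)=F$ otherwise; for a family $\mathcal F$, $C_{xy}(\mathcal F)=\{C_{xy}(F):F\in\mathcal F\}\cup\{F\in\mathcal F: C_{xy}(F)\in\mathcal F\}$. $\mathcal F$ is left-compressed if $C_{xy}(\mathcal F)=\mathcal F$ for all $x<y$. *)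

From HB Require Import structures.
From mathcomp Require Import all_boot all_order all_algebra.
From mathcomp Require Import finmap.
From mathcomp Require Import all_classical all_reals all_analysis.
Set Implicit Arguments. Unset Strict Implicit. Unset Printing Implicit Defensive.
Import Order.TTheory GRing.Theory Num.Theory.
Import numFieldNormedType.Exports.
Local Open Scope ring_scope.
Local Open Scope classical_set_scope.

Definition rgraph (r : nat) (G : {fset {fset nat}}) : Prop :=
  forall e, e \in G -> #|` e|%fset = r.

Definition weighting {R : realType} (w : nat -> R) : Prop :=
  (forall x, 0 <= w x) /\ series w n @[n --> \oo] --> (1 : R).

Definition wG {R : realType} (w : nat -> R) (G : {fset {fset nat}}) : R :=
  \sum_(e <- G) \prod_(x <- e) w x.

Definition lagrangian {R : realType} (G : {fset {fset nat}}) : R :=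
  sup [set wG w G | w in (@weighting R)].

Definition maximal_weighting {R : realType} (G : {fset {fset nat}}) (w : nat -> R) : Prop :=
  weighting w /\ wG w G = lagrangian G.

Definition decreasing_weighting {R : realType} (w : nat -> R) : Prop :=
  forall i j : nat, (i < j)%N -> w j <= w i.

Definition in_V (G : {fset {fset nat}}) (x : nat) : Prop :=
  exists2 e, e \in G & x \in e.

Definition compr (x y : nat) (F : {fset nat}) : {fset nat} :=
  if (x \notin F) && (y \in F) then fsetU (fsetD F (fset1 y)) (fset1 x) else F.

Definition comprF (x y : nat) (G : {fset {fset nat}}) : {fset {fset nat}} :=
  fsetU [fset compr x y F | F in G]%fset [fset F in G | compr x y F \in G]%fset.

Definition left_compressed (G : {fset {fset nat}}) : Prop :=
  forall x y : nat, (x < y)%N -> comprF x y G = G.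

Definition max_lagrangian_rgraph {R : realType} (r : nat) (G : {fset {fset nat}}) : Prop :=
  rgraph r G /\
  forall H, rgraph r H -> #|` H|%fset = #|` G|%fset -> @lagrangian R H <= @lagrangian R G.

From Pilot Require Import Defs.
From HB Require Import structures.
From mathcomp Require Import all_boot all_order all_algebra.
From mathcomp Require Import finmap.
From mathcomp Require Import all_classical all_reals all_analysis.
From mathcomp Require Import ring lra.
Set Implicit Arguments. Unset Strict Implicit. Unset Printing Implicit Defensive.
Import Order.TTheory GRing.Theory Num.Theory.
Import numFieldNormedType.Exports.
Local Open Scope ring_scope.

(* If an edge [F] with [y \in F], [x \notin F] had its compression [F'] outside
   [G], swapping [F] for [F'] would give an r-graph [H] with [|H| = |G|], hence
   [lambda(H) <= lambda(G) = w(G)].  Moving weight [t] from [y] to [x] gives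
   [w_t(H) = w_t(G) + (w x - w y + 2 t) Q], where [Q > 0] is the weight of
   [F \ y] and [w x >= w y], while the second difference
   [w_t(G) + w_-t(G) - 2 w(G)] is only [-O(t^2)].  Maximality of [w] then
   forces [2 t Q <= O(t^2)] for all small [t > 0], which is absurd. *)

Section Lagrangian.
Variable R : realType.

Lemma weighting_le1 (w : nat -> R) v : weighting w -> w v <= 1.
Proof.
move=> [w_ge0 w_cvg].
have series_ge0 n : 0 <= series w n by exact: sumr_ge0.
have series_nd : {homo series w : n m / (n <= m)%N >-> n <= m}.
  by move=> n m nm; exact: (nondecreasing_series (P := predT)).
have := nondecreasing_cvgn_le series_nd (cvgP _ w_cvg) v.+1.
rewrite (cvg_lim _ w_cvg) // seriesS; apply: le_trans.
by rewrite lerDl.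
Qed.

Lemma wG_le_lagrangian (w : nat -> R) G : weighting w -> wG w G <= lagrangian G.
Proof.
move=> ww; apply: ub_le_sup; last by exists w.
exists (\sum_(e <- G) (1 : R)) => _ [u wu <-].
apply: ler_sum => e _; apply: prodr_ile1 => v _.
by rewrite weighting_le1 // andbT; case: wu.
Qed.

Lemma wG_le_max_lagrangian r G H (w u : nat -> R) :
  @max_lagrangian_rgraph R r G -> maximal_weighting G w ->
  Defs.rgraph r H -> #|` H|%fset = #|` G|%fset -> weighting u -> wG u H <= wG w G.
Proof.
move=> [_ Gmax] [_ ->] rH cardH wu.
apply: le_trans (Gmax _ rH cardH); exact: wG_le_lagrangian.
Qed.

Lemma le0_of_le_mul_small (Q B s : R) :
  0 < s -> (forall t : R, 0 < t -> t <= s -> Q <= t * B) -> Q <= 0.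
Proof.
move=> s0 small; rewrite leNgt; apply/negP => Q0.
pose t := Num.min s (Q / (2 * (`|B| + 1))).
have t0 : 0 < t by rewrite lt_min s0 divr_gt0 // mulr_gt0 // ltr_wpDl.
have ts : t <= s by rewrite ge_min lexx.
have tB : t * (2 * (`|B| + 1)) <= Q.
  by rewrite -ler_pdivlMr ?ge_min ?lexx ?orbT // mulr_gt0 // ltr_wpDl.
have := small t t0 ts; have := ler_norm B; nra.
Qed.

End Lagrangian.

Section Transfer.
Variables (R : realType) (w : nat -> R) (x y : nat).

Definition transfer (t : R) : nat -> R :=
  fun v => w v + (if v == x then t else 0) - (if v == y then t else 0).

Hypothesis xy : x != y.

Lemma transfer_x t : transfer t x = w x + t.
Proof. by rewrite /transfer eqxx (negPf xy) subr0. Qed.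

Lemma transfer_y t : transfer t y = w y - t.
Proof. by rewrite /transfer eqxx eq_sym (negPf xy) addr0. Qed.

Lemma transfer_other t v : v != x -> v != y -> transfer t v = w v.
Proof. by move=> vx vy; rewrite /transfer (negPf vx) (negPf vy) addr0 subr0. Qed.

Lemma prod_transfer_notin t (S : {fset nat}) : x \notin S -> y \notin S ->
  \prod_(v <- S) transfer t v = \prod_(v <- S) w v.
Proof.
move=> xS yS; rewrite big_seq [RHS]big_seq; apply: eq_bigr => v vS.
by apply: transfer_other; apply: contraTneq vS => ->.
Qed.

Lemma transfer_weighting t : weighting w ->
  0 <= w x + t -> 0 <= w y - t -> weighting (transfer t).
Proof.
move=> [w_ge0 w_cvg] wxt wyt; split=> [v|].
  case: (eqVneq v x) => [->|vx]; first by rewrite transfer_x.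
  case: (eqVneq v y) => [->|vy]; first by rewrite transfer_y.
  by rewrite transfer_other.
apply: cvg_trans w_cvg; apply: near_eq_cvg; near=> n.
have xyn : (maxn x y < n)%N by near: n; exists (maxn x y).+1.
rewrite /series /= /transfer sumrB big_split /= -!big_mkcond /= !big_nat1_eq.
by rewrite !(leq_ltn_trans _ xyn) ?leq_maxl ?leq_maxr // addrK.
Unshelve. all: by end_near.
Qed.

Lemma transfer_weighting_small u : weighting w ->
  w y <= w x -> `|u| <= w y -> weighting (transfer u).
Proof.
rewrite ler_norml => ww wyx /andP[yu uy]; apply: transfer_weighting => //.
  by rewrite -[u]opprK subr_ge0 (le_trans _ wyx) // lerNl.
by rewrite subr_ge0.
Qed.

Lemma prod_fsetD2 (f : nat -> R) (F : {fset nat}) :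
  \prod_(v <- F) f v = (if x \in F then f x else 1) * (if y \in F then f y else 1)
                       * \prod_(v <- (F `\ x `\ y)%fset) f v.
Proof.
have yFx : (y \in (F `\ x)%fset) = (y \in F) by rewrite !inE eq_sym xy.
have fsetD1_id (A : {fset nat}) a : a \notin A -> (A `\ a)%fset = A.
  by move=> aA; apply/fsetP => z; rewrite !inE; case: eqVneq => // ->; rewrite (negPf aA).
case: (boolP (x \in F)) => xF; last first.
  rewrite mul1r (fsetD1_id F x xF); case: (boolP (y \in F)) => yF.
    by rewrite (big_fsetD1 y yF).
  by rewrite mul1r fsetD1_id.
rewrite (big_fsetD1 x xF) -mulrA; congr (_ * _).
case: (boolP (y \in F)) => yF; first by rewrite (big_fsetD1 y) ?yFx.
by rewrite mul1r (fsetD1_id (F `\ x)%fset y) // yFx.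
Qed.

Lemma prod_transfer_second_diff t (F : {fset nat}) : (forall v, 0 <= w v) ->
  - (2 * t ^+ 2) * \prod_(v <- (F `\ x `\ y)%fset) w v
  <= \prod_(v <- F) transfer t v + \prod_(v <- F) transfer (- t) v
     - 2 * \prod_(v <- F) w v.
Proof.
move=> w_ge0; rewrite !(prod_fsetD2 _ F) !prod_transfer_notin ?inE ?eqxx ?andbF //.
rewrite !transfer_x !transfer_y.
have : 0 <= \prod_(v <- (F `\ x `\ y)%fset) w v by exact: prodr_ge0.
move: (\prod_(v <- _) w v) => P P0.
by case: (x \in F); case: (y \in F); nra.
Qed.

Lemma wG_transfer_second_diff t (G : {fset {fset nat}}) : (forall v, 0 <= w v) ->
  - (2 * t ^+ 2) * \sum_(F <- G) \prod_(v <- (F `\ x `\ y)%fset) w v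
  <= wG (transfer t) G + wG (transfer (- t)) G - 2 * wG w G.
Proof.
move=> w_ge0; rewrite /wG !mulr_sumr -big_split -sumrB /=.
by apply: ler_sum => F _; exact: prod_transfer_second_diff.
Qed.

End Transfer.
Arguments transfer {R} w x y t.

Section Compression.
Variables (x y : nat).

Lemma compr_notin_in (F : {fset nat}) : x \notin F -> y \in F ->
  compr x y F = (x |` (F `\ y))%fset.
Proof. by move=> xF yF; rewrite /compr xF yF fsetUC. Qed.

Lemma card_compr (F : {fset nat}) : #|` compr x y F|%fset = #|` F|%fset.
Proof.
rewrite /compr; case: ifP => // /andP[xF yF].
rewrite fsetUC cardfsU1 inE (negPf xF) andbF [in RHS](cardfsD1 y F) yF.
by rewrite add1n.
Qed.

Lemma prod_compr (R : comRingType) (f : nat -> R) (F : {fset nat}) :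
  x \notin F -> y \in F ->
  \prod_(v <- compr x y F) f v - \prod_(v <- F) f v
  = (f x - f y) * \prod_(v <- (F `\ y)%fset) f v.
Proof.
move=> xF yF; rewrite compr_notin_in // big_fsetU1 ?inE ?(negPf xF) ?andbF //.
by rewrite (big_fsetD1 y yF) mulrBl.
Qed.

Lemma comprF_id (G : {fset {fset nat}}) :
  (forall F, F \in G -> compr x y F \in G) -> comprF x y G = G.
Proof.
move=> comprG; apply/fsetP => F; rewrite /comprF in_fsetU; apply/idP/idP.
  by case/orP => [/imfsetP[F' /= F'G ->]|]; [exact: comprG | rewrite !inE => /andP[]].
by move=> FG; rewrite !inE FG comprG ?orbT.
Qed.

End Compression.

Section ReplaceEdge.
Variables (G : {fset {fset nat}}) (F0 F1 : {fset nat}).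
Hypotheses (F0G : F0 \in G) (F1G : F1 \notin G).

Let F1GF0 : F1 \notin (G `\ F0)%fset.
Proof. by rewrite inE (negPf F1G) andbF. Qed.

Lemma rgraph_replace r : Defs.rgraph r G -> #|` F1|%fset = r ->
  Defs.rgraph r (F1 |` (G `\ F0))%fset.
Proof. by move=> rG F1r e; rewrite !inE => /orP[/eqP -> | /andP[_ /rG]]. Qed.

Lemma card_replace : #|` (F1 |` (G `\ F0))|%fset = #|` G|%fset.
Proof. by rewrite cardfsU1 F1GF0 [in RHS](cardfsD1 F0 G) F0G. Qed.

Lemma wG_replace (R : realType) (u : nat -> R) :
  wG u (F1 |` (G `\ F0))%fset
  = wG u G + (\prod_(v <- F1) u v - \prod_(v <- F0) u v).
Proof. by rewrite /wG big_fsetU1 // (big_fsetD1 F0 F0G) addrAC addrCA subrr addr0. Qed.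

End ReplaceEdge.

Section LeftCompression.
Variables (R : realType) (r : nat) (G : {fset {fset nat}}) (w : nat -> R) (x y : nat).
Hypotheses (Gmax : @max_lagrangian_rgraph R r G) (wmax : maximal_weighting G w).
Hypotheses (V_pos : forall v, in_V G v -> 0 < w v) (wyx : w y <= w x) (xy : x != y).

Lemma compr_mem F0 : F0 \in G -> compr x y F0 \in G.
Proof.
move=> F0G; case: (boolP ((x \notin F0) && (y \in F0))); last first.
  by rewrite /compr => /negPf ->.
case/andP=> xF0 yF0; apply/negPn/negP => F1G.
have [[w_ge0 _] _] := wmax.
have wy0 : 0 < w y by apply: V_pos; exists F0.
set Q := \prod_(v <- (F0 `\ y)%fset) w v.
have Q0 : 0 < Q.
  rewrite /Q big_seq; apply: prodr_gt0 => v; rewrite inE => /andP[_ vF0].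
  by apply: V_pos; exists F0.
set B := \sum_(F <- G) \prod_(v <- (F `\ x `\ y)%fset) w v.
suff : Q <= 0 by rewrite leNgt Q0.
apply: (@le0_of_le_mul_small _ Q B (w y)) => // t t0 ty.
have t_le_wy : `|t| <= w y by rewrite ger0_norm ?(ltW t0).
have wtP := transfer_weighting_small xy wmax.1 wyx t_le_wy.
rewrite -normrN in t_le_wy.
have wtN := transfer_weighting_small xy wmax.1 wyx t_le_wy.
have rH : Defs.rgraph r (compr x y F0 |` (G `\ F0))%fset.
  by apply: rgraph_replace Gmax.1 _; rewrite card_compr Gmax.1.
have gainH := wG_le_max_lagrangian Gmax wmax rH (card_replace F0G F1G) wtP.
have gainG := wG_le_max_lagrangian Gmax wmax Gmax.1 erefl wtN.
have second_diff := wG_transfer_second_diff xy t G w_ge0; rewrite -/B in second_diff.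
rewrite wG_replace // prod_compr // transfer_x // transfer_y // in gainH.
rewrite prod_transfer_notin ?fsetD11 ?inE ?(negPf xF0) ?andbF // -/Q in gainH.
have gain : (w x + t - (w y - t)) * Q <= 2 * t ^+ 2 * B by lra.
have gapQ : 0 <= (w x - w y) * Q by rewrite mulr_ge0 ?subr_ge0 // ltW.
have : t * Q <= t * (t * B) by lra.
by rewrite ler_pM2l.
Qed.

End LeftCompression.

Theorem lemma3p5 (R : realType) (r : nat) (G : {fset {fset nat}}) (w : nat -> R) :
  @max_lagrangian_rgraph R r G ->
  maximal_weighting G w ->
  decreasing_weighting w ->
  (forall x, in_V G x -> 0 < w x) ->
  left_compressed G.
Proof.
move=> Gmax wmax wdec V_pos x y xy; apply: comprF_id => F.
by apply: (compr_mem Gmax wmax V_pos (wdec _ _ xy)); rewrite neq_ltn xy.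
Qed.
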